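(* Let $J=[0,+\infty)$ and let $A\colon J\to\mathcal{L}(\mathbb{R}^n)$ be of locally bounded variation on $J$ such that $I-\Delta^{-}A(t)$ is invertible for all $t\in(0,+\infty)$ and $I+\Delta^{+}A(t)$ is invertible for all $t\in J$. Let $U$ be the transition matrix of $\frac{dx}{d\tau}=D[A(t)x]$. Then the trivial solution of this equation is globally asymptotically stable if and only if for every $s_0\in J$, $\|U(t,s_0)\|\to 0$ as $t\to+\infty$.
   Context: Here $\Delta^{+}A(t)=A(t^+)-A(t)$, $\Delta^{-}A(t)=A(t)-A(t^-)$. Integrals $\int_a^b \mathrm{d}[A(s)]x(s)$ are Perron–Stieltjes (Kurzweil–Stieltjes) integrals. A solution of $\frac{dx}{d\tau}=D[A(t)x]$ is a function $x$ with $x(b)-x(a)=\int_a^b\mathrm{d}[A(s)]x(s)$ for all $a,b$ in its interval of definition. The transition matrix $U\colon J\times J\to\mathcal{L}(\mathbb{R}^n)$ is the unique matrix function with $U(t,s)=I+\int_s^t\mathrm{d}[A(r)]U(r,s)$; the unique solution with $x(s_0)=x_0$ is $x(t,s_0,x_0)=U(t,s_0)x_0$ for $t\ge s_0$. The trivial solution is stable if for every $s_0\ge0$ and $\varepsilon>0$ there is $\delta=\delta(s_0,\varepsilon)>0$ such that $\|x_0\|<\delta$ implies $\|x(t,s_0,x_0)\|<\varepsilon$ for all $t\ge s_0$. It is globally asymptotically stable if it is stable and for every $s_0\ge 0$ and every $x_0\in\mathbb{R}^n$, $\|x(t,s_0,x_0)\|\to0$ as $t\to+\infty$. *)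

From HB Require Import structures.
From mathcomp Require Import all_boot all_order all_algebra.
From mathcomp Require Import all_classical all_reals all_analysis.
Set Implicit Arguments. Unset Strict Implicit. Unset Printing Implicit Defensive.
Import Order.TTheory GRing.Theory Num.Theory.
Import numFieldNormedType.Exports.
Local Open Scope classical_set_scope.
Local Open Scope ring_scope.

Section KS.
Variables (R : realType) (n : nat).

Definition division (a b : R) (m : nat) (D : nat -> R) : Prop :=
  D 0%N = a /\ D m = b /\ (forall i, (i < m)%N -> D i < D i.+1).

Definition tagged_division (a b : R) (m : nat) (D T : nat -> R) : Prop :=
  division a b m D /\ (forall i, (i < m)%N -> D i <= T i <= D i.+1).

Definition delta_fine (delta : R -> R) (m : nat) (D T : nat -> R) : Prop :=
  forall i, (i < m)%N -> T i - delta (T i) < D i /\ D i.+1 < T i + delta (T i).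

Definition var_sum (A : R -> 'M[R]_n) (m : nat) (D : nat -> R) : R :=
  \sum_(i < m) `|A (D i.+1) - A (D i)|.

Definition bounded_variation_on (A : R -> 'M[R]_n) (a b : R) : Prop :=
  exists M : R, forall m D, division a b m D -> var_sum A m D <= M.

Definition loc_BV_J (A : R -> 'M[R]_n) : Prop :=
  forall a b, 0 <= a -> a <= b -> bounded_variation_on A a b.

Definition KS_sum (p : nat) (A : R -> 'M[R]_n) (x : R -> 'M[R]_(n, p))
    (m : nat) (D T : nat -> R) : 'M[R]_(n, p) :=
  \sum_(i < m) ((A (D i.+1) - A (D i)) *m x (T i)).

Definition KS_integral_le (p : nat) (A : R -> 'M[R]_n) (x : R -> 'M[R]_(n, p))
    (a b : R) (I : 'M[R]_(n, p)) : Prop :=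
  forall eps : R, 0 < eps ->
    exists delta : R -> R, (forall t, a <= t <= b -> 0 < delta t) /\
      forall m D T, tagged_division a b m D T -> delta_fine delta m D T ->
        `|KS_sum A x m D T - I| < eps.

Definition KS_integral (p : nat) (A : R -> 'M[R]_n) (x : R -> 'M[R]_(n, p))
    (a b : R) (I : 'M[R]_(n, p)) : Prop :=
  if a <= b then KS_integral_le A x a b I else KS_integral_le A x b a (- I).

Definition jump_plus (A : R -> 'M[R]_n) (t : R) : 'M[R]_n :=
  lim (A s @[s --> t^'+]) - A t.
Definition jump_minus (A : R -> 'M[R]_n) (t : R) : 'M[R]_n :=
  A t - lim (A s @[s --> t^'-]).

Definition transition_matrix (A : R -> 'M[R]_n) (U : R -> R -> 'M[R]_n) : Prop :=
  forall t s, 0 <= t -> 0 <= s ->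
    KS_integral A (fun r => U r s) s t (U t s - 1%:M).

Definition is_solution_from (A : R -> 'M[R]_n) (s0 : R) (x : R -> 'cV[R]_n) : Prop :=
  forall a b, s0 <= a -> s0 <= b -> KS_integral A x a b (x b - x a).

(* Stability of the trivial solution; x(t, s0, x0) is the solution on [s0,+oo)
   with x(s0) = x0. *)
Definition trivial_stable (A : R -> 'M[R]_n) : Prop :=
  forall s0 eps : R, 0 <= s0 -> 0 < eps ->
    exists delta : R, 0 < delta /\
      forall (x0 : 'cV[R]_n) (x : R -> 'cV[R]_n),
        `|x0| < delta -> is_solution_from A s0 x -> x s0 = x0 ->
        forall t, s0 <= t -> `|x t| < eps.

Definition trivial_glob_asympt_stable (A : R -> 'M[R]_n) : Prop :=
  trivial_stable A /\
  forall (s0 : R) (x0 : 'cV[R]_n) (x : R -> 'cV[R]_n), 0 <= s0 ->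
    is_solution_from A s0 x -> x s0 = x0 ->
    `|x t| @[t --> +oo] --> (0 : R).

End KS.

From HB Require Import structures.
From mathcomp Require Import all_boot all_order all_algebra.
From mathcomp Require Import all_classical all_reals all_analysis.
From mathcomp Require Import ring lra.
Import Order.TTheory GRing.Theory Num.Theory.
Import numFieldNormedType.Exports.
Local Open Scope classical_set_scope.
Local Open Scope ring_scope.
Set Implicit Arguments. Unset Strict Implicit. Unset Printing Implicit Defensive.

(* Every solution from s0 is t |-> U(t, s0) x(s0): solutions of the generalized
   equation are unique forward in time.  At a point c where a solution y vanishes
   on the left, invertibility of I - Delta^- A(c) forces y(c) = 0; once y(c) = 0,
   the variation of A on (c, c + h] is small for small h, and the integral
   equation contracts sup |y| on [c, c + h] to zero.  Global asymptotic stability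
   is thus the statement that the columns of U(., s0) tend to 0 and that
   sup_{t >= s0} |U(t, s0)| is finite; the latter follows from the former since
   U(., s0) is bounded on compact intervals. *)

Section Divisions.
Variable R : realType.
Implicit Types (a b c t : R) (D T : nat -> R) (delta : R -> R).

Definition segment_points a b (i : nat) : R := if i == 0%N then a else b.

Lemma division_segment a b : a < b -> division a b 1 (segment_points a b).
Proof. by move=> ab; split; [|split] => // i; rewrite ltnS leqn0 => /eqP ->. Qed.

Lemma tagged_division_segment a b t : a < b -> a <= t <= b ->
  tagged_division a b 1 (segment_points a b) (fun=> t).
Proof.
move=> ab abt; split; first exact: division_segment.
by move=> i; rewrite ltnS leqn0 => /eqP ->.
Qed.

Lemma delta_fine_segment delta a b t : t - delta t < a -> b < t + delta t ->
  delta_fine delta 1 (segment_points a b) (fun=> t).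
Proof. by move=> ta bt i; rewrite ltnS leqn0 => /eqP ->. Qed.

Lemma delta_fine_le delta delta' m D T : (forall t, delta t <= delta' t) ->
  delta_fine delta m D T -> delta_fine delta' m D T.
Proof.
move=> le_delta fine i im; have [lt1 lt2] := fine i im; have := le_delta (T i).
by split; lra.
Qed.

Lemma delta_fine_minl delta1 delta2 m D T :
  delta_fine (fun t => Num.min (delta1 t) (delta2 t)) m D T -> delta_fine delta1 m D T.
Proof. by apply: delta_fine_le => t; rewrite ge_min lexx. Qed.

Lemma delta_fine_minr delta1 delta2 m D T :
  delta_fine (fun t => Num.min (delta1 t) (delta2 t)) m D T -> delta_fine delta2 m D T.
Proof. by apply: delta_fine_le => t; rewrite ge_min lexx orbT. Qed.

Lemma division_le a b m D : division a b m D ->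
  forall i j, (i <= j <= m)%N -> D i <= D j.
Proof.
move=> [_ [_ incr]] i; elim=> [|j IHj] /andP[ij jm].
  by move: ij; rewrite leqn0 => /eqP ->.
rewrite leq_eqVlt in ij; case/orP: ij => [/eqP -> //| ij].
by apply: le_trans (IHj _) (ltW (incr j jm)); rewrite -ltnS ij ltnW.
Qed.

Lemma division_bounds a b m D : division a b m D ->
  forall i, (i <= m)%N -> a <= D i <= b.
Proof.
move=> dD i im; have [D0 [Dm _]] := dD.
by rewrite -D0 -Dm !(division_le dD) // im leqnn.
Qed.

Lemma division_ends_le a b m D : division a b m D -> a <= b.
Proof. by move=> dD; have /andP[/le_trans] := division_bounds dD (leqnn m); apply. Qed.

Lemma division_cover a b m D t : division a b m D -> a < t -> t <= b ->
  exists2 i, (i < m)%N & D i < t <= D i.+1.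
Proof.
move=> [D0 [Dm _]] lt_at tb.
suff: forall k, (k <= m)%N -> t <= D k -> exists2 i, (i < k)%N & D i < t <= D i.+1.
  by move=> /(_ m (leqnn m)); rewrite Dm => /(_ tb) [i im]; exists i.
elim=> [|k IHk] km tk; first by move: lt_at; rewrite -D0; lra.
have [tk'|kt] := lerP t (D k); last by exists k; rewrite ?kt.
by have [i ik] := IHk (ltnW km) tk'; exists i => //; rewrite ltnW.
Qed.

Lemma division_trivial a m D : division a a m D -> m = 0%N.
Proof.
case: m => // m dD; have [D0 [Dm incr]] := dD.
have := division_le dD (i := 1) (j := m.+1); rewrite Dm leqnn /= => /(_ isT).
by have := incr 0%N (ltn0Sn m); rewrite D0 => /lt_le_trans/[apply]; rewrite ltxx.
Qed.

Lemma division_behead a b m D : division a b m.+1 D ->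
  division (D 1%N) b m (fun i => D i.+1).
Proof. by move=> [_ [Dm incr]]; split; [|split] => // i im; apply: incr. Qed.

Definition cat_points m1 D1 D2 (i : nat) : R :=
  if (i <= m1)%N then D1 i else D2 (i - m1)%N.

Definition cat_tags m1 T1 T2 (i : nat) : R :=
  if (i < m1)%N then T1 i else T2 (i - m1)%N.

Section CatCells.
Variables (m1 m2 : nat) (D1 D2 : nat -> R).
Hypothesis glue : D1 m1 = D2 0%N.

Lemma cat_points_r i : (m1 <= i)%N -> cat_points m1 D1 D2 i = D2 (i - m1)%N.
Proof.
rewrite /cat_points => m1i; case: ifP => // im1.
have -> : i = m1 by apply/eqP; rewrite eqn_leq im1.
by rewrite subnn.
Qed.

Lemma cat_cellsP T1 T2 (P : R -> R -> R -> Prop) :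
  (forall j, (j < m1)%N -> P (D1 j) (D1 j.+1) (T1 j)) ->
  (forall j, (j < m2)%N -> P (D2 j) (D2 j.+1) (T2 j)) ->
  forall i, (i < m1 + m2)%N ->
    P (cat_points m1 D1 D2 i) (cat_points m1 D1 D2 i.+1) (cat_tags m1 T1 T2 i).
Proof.
move=> P1 P2 i im; rewrite /cat_tags; case: (ltnP i m1) => [im1|m1i].
  by rewrite /cat_points (ltnW im1) im1; apply: P1.
rewrite !cat_points_r ?(leqW m1i) // subSn //.
by apply: P2; rewrite ltn_subLR.
Qed.

Lemma big_cat_cells T1 T2 (V : zmodType) (F : R -> R -> R -> V) :
  \sum_(i < (m1 + m2)%N)
      F (cat_points m1 D1 D2 i) (cat_points m1 D1 D2 i.+1) (cat_tags m1 T1 T2 i)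
  = \sum_(i < m1) F (D1 i) (D1 i.+1) (T1 i) + \sum_(i < m2) F (D2 i) (D2 i.+1) (T2 i).
Proof.
rewrite big_split_ord; congr (_ + _); apply: eq_bigr => i _.
  by have im1 := ltn_ord i; rewrite /cat_points /cat_tags /= im1 (ltnW im1).
rewrite /cat_tags /= ltnNge leq_addr /= !cat_points_r ?leq_addr //; last first.
  by rewrite -addnS leq_addr.
by rewrite -addnS !addKn.
Qed.

Lemma division_cat a b c : division a b m1 D1 -> division b c m2 D2 ->
  division a c (m1 + m2)%N (cat_points m1 D1 D2).
Proof.
move=> [D10 [_ incr1]] [_ [D2m incr2]]; split; first by rewrite /cat_points leq0n.
split; first by rewrite cat_points_r ?leq_addr // addKn.
by move=> i; apply: (cat_cellsP (T1 := D1) (T2 := D2) (P := fun u v _ => u < v)).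
Qed.

Lemma tagged_division_cat T1 T2 a b c :
  tagged_division a b m1 D1 T1 -> tagged_division b c m2 D2 T2 ->
  tagged_division a c (m1 + m2)%N (cat_points m1 D1 D2) (cat_tags m1 T1 T2).
Proof.
move=> [dD1 tag1] [dD2 tag2]; split; first exact: division_cat dD1 dD2.
by move=> i; apply: (cat_cellsP (P := fun u v t => u <= t <= v)).
Qed.

Lemma delta_fine_cat T1 T2 delta :
  delta_fine delta m1 D1 T1 -> delta_fine delta m2 D2 T2 ->
  delta_fine delta (m1 + m2)%N (cat_points m1 D1 D2) (cat_tags m1 T1 T2).
Proof.
by move=> f1 f2 i; apply: (cat_cellsP (P := fun u v t => t - delta t < u /\ v < t + delta t)).
Qed.

End CatCells.

Definition fine_division delta a b :=
  exists m D T, tagged_division a b m D T /\ delta_fine delta m D T.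

Lemma fine_division_refl delta a : fine_division delta a a.
Proof. by exists 0%N, (fun=> a), (fun=> a); do !split. Qed.

Lemma fine_division_segment delta a b t : a < b -> a <= t <= b ->
  t - delta t < a -> b < t + delta t -> fine_division delta a b.
Proof.
move=> ab abt ta bt; exists 1%N, (segment_points a b), (fun=> t).
by split; [exact: tagged_division_segment | exact: delta_fine_segment].
Qed.

Lemma fine_division_cat delta a b c :
  fine_division delta a b -> fine_division delta b c -> fine_division delta a c.
Proof.
move=> [m1 [D1 [T1 [tD1 fD1]]]] [m2 [D2 [T2 [tD2 fD2]]]].
have glue : D1 m1 = D2 0%N by case: tD1 => -[_ [-> _]] _; case: tD2 => -[-> _].
exists (m1 + m2)%N, (cat_points m1 D1 D2), (cat_tags m1 T1 T2).
by split; [exact (tagged_division_cat glue tD1 tD2) | exact (delta_fine_cat glue fD1 fD2)].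
Qed.

(* Cousin's lemma: the supremum of the x admitting a delta-fine division of
   [a, x] is b. *)
Lemma cousin delta a b : a <= b -> (forall t, a <= t <= b -> 0 < delta t) ->
  fine_division delta a b.
Proof.
move=> ab delta_gt0.
pose S := [set x | a <= x <= b /\ fine_division delta a x].
have Sa : S a by split; [rewrite lexx ab | exact: fine_division_refl].
have supS : has_sup S by split; [exists a | exists b => x [/andP[]]].
pose c := sup S.
have ac : a <= c by apply: sup_upper_bound.
have cb : c <= b by apply: ge_sup; [exists a | move=> x [/andP[]]].
have dc : 0 < delta c by apply: delta_gt0; rewrite ac cb.
have [x [/andP[ax xb] fx] cx] := sup_adherent dc supS.
have xc : x <= c by apply: sup_upper_bound => //; rewrite /S /= ax xb.
have Sc : fine_division delta a c.
  have [<- //|xc'] := eqVneq x c.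
  have {}xc : x < c by rewrite lt_neqAle xc' xc.
  apply: fine_division_cat fx (fine_division_segment (t := c) xc _ _ _).
  - by rewrite ltW ?lexx.
  - by move: cx; rewrite -/c; lra.
  - by lra.
have [<- //|cb'] := eqVneq c b.
have {}cb : c < b by rewrite lt_neqAle cb' cb.
pose y := Num.min (c + delta c / 2) b.
have cy : c < y by rewrite lt_min; apply/andP; split; lra.
have Sy : S y.
  split; first by rewrite ge_min lexx orbT andbT; lra.
  apply: fine_division_cat Sc (fine_division_segment (t := c) cy _ _ _).
  - by rewrite lexx ltW.
  - by lra.
  - by rewrite gt_min; apply/orP; left; lra.
have : y <= c by apply: sup_upper_bound.
by lra.
Qed.

Lemma delta_fine_first_tag delta c b m D T :
  (forall r, c < r -> delta r <= r - c) ->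
  tagged_division c b m.+1 D T -> delta_fine delta m.+1 D T -> T 0%N = c.
Proof.
move=> delta_le [[D0 _] tag] fine.
have [/andP[cT _] [fine0 _]] := (tag 0%N isT, fine 0%N isT).
rewrite D0 in cT fine0; apply/eqP; rewrite eq_le cT andbT leNgt.
by apply/negP => /delta_le; lra.
Qed.

End Divisions.

Section MatrixNorm.
Variable R : realType.

Lemma mx_entry_norm_le p q (M : 'M[R]_(p, q)) i j : `|M i j| <= `|M|.
Proof.
rewrite [leRHS]/Num.Def.normr /= mx_normrE.
by apply/bigmax_geP; right; exists (i, j).
Qed.

Lemma mx_norm_le p q (M : 'M[R]_(p, q)) (c : R) : 0 <= c ->
  (forall i j, `|M i j| <= c) -> `|M| <= c.
Proof.
move=> c_ge0 Mc; rewrite [leLHS]/Num.Def.normr /= mx_normrE.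
by apply: bigmax_le => // -[i j] _.
Qed.

Lemma normr_mulmx_le p q r (M : 'M[R]_(p, q)) (N : 'M[R]_(q, r)) :
  `|M *m N| <= q%:R * `|M| * `|N|.
Proof.
apply: mx_norm_le => [|i j]; first by rewrite !mulr_ge0.
rewrite mxE; apply: le_trans (ler_norm_sum _ _ _) _.
apply: le_trans (_ : \sum_(k < q) `|M| * `|N| <= _).
  apply: ler_sum => k _; rewrite normrM.
  by apply: ler_pM => //; apply: mx_entry_norm_le.
by rewrite sumr_const card_ord -mulrA mulr_natl.
Qed.

Lemma mx_norm_le_sum_col p q (M : 'M[R]_(p, q)) :
  `|M| <= \sum_(j < q) `|col j M|.
Proof.
apply: mx_norm_le => [|i j]; first exact: sumr_ge0.
have -> : M i j = col j M i 0 by rewrite mxE.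
apply: le_trans (mx_entry_norm_le _ i 0) _.
by rewrite (bigD1 j) //= lerDl sumr_ge0.
Qed.

End MatrixNorm.

Section KurzweilStieltjesIntegral.
Variables (R : realType) (n : nat) (A : R -> 'M[R]_n).
Implicit Types (a b c d t : R) (D T : nat -> R) (delta : R -> R).

Lemma KS_sum_segment p (x : R -> 'M[R]_(n, p)) u v w :
  KS_sum A x 1 (segment_points u v) (fun=> w) = (A v - A u) *m x w.
Proof. by rewrite /KS_sum big_ord1. Qed.

Lemma KS_sum_recl p (x : R -> 'M[R]_(n, p)) m D T :
  KS_sum A x m.+1 D T = (A (D 1%N) - A (D 0%N)) *m x (T 0%N)
                        + KS_sum A x m (fun i => D i.+1) (fun i => T i.+1).
Proof. by rewrite /KS_sum big_ord_recl. Qed.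

Lemma KS_sum_mulmxr p r (x : R -> 'M[R]_(n, p)) (M : 'M[R]_(p, r)) m D T :
  KS_sum A (fun s => x s *m M) m D T = KS_sum A x m D T *m M.
Proof. by rewrite /KS_sum mulmx_suml; apply: eq_bigr => i _; rewrite mulmxA. Qed.

Lemma KS_sumB p (x y : R -> 'M[R]_(n, p)) m D T :
  KS_sum A (fun s => x s - y s) m D T = KS_sum A x m D T - KS_sum A y m D T.
Proof. by rewrite /KS_sum -sumrB; apply: eq_bigr => i _; rewrite mulmxBr. Qed.

Lemma normr_KS_sum_le p (x : R -> 'M[R]_(n, p)) m D T K :
  (forall i, (i < m)%N -> `|x (T i)| <= K) ->
  `|KS_sum A x m D T| <= n%:R * K * var_sum A m D.
Proof.
move=> xK; rewrite /var_sum mulr_sumr; apply: le_trans (ler_norm_sum _ _ _) _.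
apply: ler_sum => i _; apply: le_trans (normr_mulmx_le _ _) _.
by rewrite mulrAC ler_wpM2r // ler_wpM2l // xK.
Qed.

Lemma KS_integral_le0 p (x : R -> 'M[R]_(n, p)) a : KS_integral_le A x a a 0.
Proof.
move=> e e_gt0; exists (fun=> 1); split => // m D T [dD _] _.
by rewrite (division_trivial dD) /KS_sum big_ord0 subr0 normr0.
Qed.

Lemma KS_integral_le_unique p (x : R -> 'M[R]_(n, p)) a b I J : a <= b ->
  KS_integral_le A x a b I -> KS_integral_le A x a b J -> I = J.
Proof.
move=> ab intI intJ; apply/eqP; rewrite -subr_eq0 -normr_le0.
rewrite leNgt; apply/negP => IJ_gt0.
have e_gt0 : 0 < `|I - J| / 2 by rewrite divr_gt0.
have [dI [dI_gt0 closeI]] := intI _ e_gt0.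
have [dJ [dJ_gt0 closeJ]] := intJ _ e_gt0.
have d_gt0 t : a <= t <= b -> 0 < Num.min (dI t) (dJ t).
  by move=> abt; rewrite lt_min dI_gt0 ?dJ_gt0.
have [m [D [T [tD fD]]]] := cousin ab d_gt0.
have := closeI _ _ _ tD (delta_fine_minl fD).
have := closeJ _ _ _ tD (delta_fine_minr fD).
have := ler_distD (KS_sum A x m D T) I J; rewrite (distrC I (KS_sum A x m D T)).
lra.
Qed.

Lemma KS_integral_le_mulmxr p r (x : R -> 'M[R]_(n, p)) (M : 'M[R]_(p, r)) a b I :
  KS_integral_le A x a b I -> KS_integral_le A (fun s => x s *m M) a b (I *m M).
Proof.
move=> intI e e_gt0.
have k_gt0 : 0 < p%:R * `|M| + 1 by rewrite ltr_pwDr ?mulr_ge0.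
have [delta [delta_gt0 closeI]] := intI _ (divr_gt0 e_gt0 k_gt0).
exists delta; split => // m D T tD fD.
rewrite KS_sum_mulmxr -mulmxBl; apply: le_lt_trans (normr_mulmx_le _ _) _.
have := closeI _ _ _ tD fD; rewrite ltr_pdivlMr //.
have := normr_ge0 (KS_sum A x m D T - I); have := normr_ge0 M.
nra.
Qed.

Lemma KS_integral_leB p (x y : R -> 'M[R]_(n, p)) a b I J :
  KS_integral_le A x a b I -> KS_integral_le A y a b J ->
  KS_integral_le A (fun s => x s - y s) a b (I - J).
Proof.
move=> intI intJ e e_gt0.
have e2_gt0 : 0 < e / 2 by rewrite divr_gt0.
have [dI [dI_gt0 closeI]] := intI _ e2_gt0.
have [dJ [dJ_gt0 closeJ]] := intJ _ e2_gt0.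
exists (fun t => Num.min (dI t) (dJ t)); split.
  by move=> t abt; rewrite lt_min dI_gt0 ?dJ_gt0.
move=> m D T tD fD; rewrite KS_sumB.
have -> : KS_sum A x m D T - KS_sum A y m D T - (I - J)
    = (KS_sum A x m D T - I) - (KS_sum A y m D T - J).
  by rewrite !opprD !opprK addrACA.
apply: le_lt_trans (ler_normB _ _) _.
have := closeI _ _ _ tD (delta_fine_minl fD).
have := closeJ _ _ _ tD (delta_fine_minr fD).
lra.
Qed.

Lemma fine_division_KS_sum_cat p (x : R -> 'M[R]_(n, p)) delta a b c
    m1 D1 T1 m2 D2 T2 :
  tagged_division a b m1 D1 T1 -> delta_fine delta m1 D1 T1 ->
  tagged_division b c m2 D2 T2 -> delta_fine delta m2 D2 T2 ->
  exists m D T, [/\ tagged_division a c m D T, delta_fine delta m D T &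
    KS_sum A x m D T = KS_sum A x m1 D1 T1 + KS_sum A x m2 D2 T2].
Proof.
move=> tD1 fD1 tD2 fD2.
have glue : D1 m1 = D2 0%N by case: tD1 => -[_ [-> _]] _; case: tD2 => -[-> _].
exists (m1 + m2)%N, (cat_points m1 D1 D2), (cat_tags m1 T1 T2); split.
- exact (tagged_division_cat glue tD1 tD2).
- exact (delta_fine_cat glue fD1 fD2).
- by rewrite /KS_sum (big_cat_cells m2 glue T1 T2 (fun u v t => (A v - A u) *m x t)).
Qed.

(* One gauge of [c, d] controls the integral sums over every
   subinterval [a, b]: complete a fine division of [a, b] by fine divisions
   of [c, a] and [b, d] and compare with the integral over [c, d]. *)
Lemma KS_integral_le_subinterval_gauge p (x : R -> 'M[R]_(n, p)) c d I :
  c <= d -> KS_integral_le A x c d I ->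
  forall eps, 0 < eps -> exists delta,
    (forall t, c <= t <= d -> 0 < delta t) /\
    forall a b I1 I2, c <= a -> a <= b -> b <= d ->
      KS_integral_le A x c a I1 -> KS_integral_le A x b d I2 ->
      forall m D T, tagged_division a b m D T -> delta_fine delta m D T ->
        `|KS_sum A x m D T - (I - I1 - I2)| < eps.
Proof.
move=> cd intI e e_gt0.
have [e2_gt0 e4_gt0] : 0 < e / 2 /\ 0 < e / 4 by split; rewrite divr_gt0.
have [d0 [d0_gt0 close0]] := intI _ e2_gt0.
exists d0; split => // a b I1 I2 ca ab bd intI1 intI2 m D T tD fD.
have [d1 [d1_gt0 close1]] := intI1 _ e4_gt0.
have [d2 [d2_gt0 close2]] := intI2 _ e4_gt0.
have [m1 [D1 [T1 [tD1 fD1]]]] : fine_division (fun t => Num.min (d0 t) (d1 t)) c a.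
  apply: cousin ca _ => t /andP[ct ta].
  by rewrite lt_min d1_gt0 ?ct ?ta // d0_gt0 // ct (le_trans ta (le_trans ab bd)).
have [m2 [D2 [T2 [tD2 fD2]]]] : fine_division (fun t => Num.min (d0 t) (d2 t)) b d.
  apply: cousin bd _ => t /andP[bt td].
  by rewrite lt_min d2_gt0 ?bt ?td // d0_gt0 // td (le_trans (le_trans ca ab) bt).
have [m' [D' [T' [tD' fD' sum']]]] :=
  fine_division_KS_sum_cat x tD1 (delta_fine_minl fD1) tD fD.
have [m'' [D'' [T'' [tD'' fD'' sum'']]]] :=
  fine_division_KS_sum_cat x tD' fD' tD2 (delta_fine_minl fD2).
have := close0 _ _ _ tD'' fD''; rewrite sum'' sum'.
have := close1 _ _ _ tD1 (delta_fine_minr fD1).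
have := close2 _ _ _ tD2 (delta_fine_minr fD2).
set S := KS_sum A x m D T; set S1 := KS_sum A x m1 D1 T1.
set S2 := KS_sum A x m2 D2 T2.
have -> : S - (I - I1 - I2) = (S1 + S + S2 - I) - (S1 - I1) - (S2 - I2).
  by apply/matrixP => i j; rewrite !mxE; ring.
have := ler_normB (S1 + S + S2 - I - (S1 - I1)) (S2 - I2).
have := ler_normB (S1 + S + S2 - I) (S1 - I1).
lra.
Qed.

Lemma KS_integral_le_restrict p (x : R -> 'M[R]_(n, p)) c a d I I1 :
  c <= a -> a <= d ->
  KS_integral_le A x c d I -> KS_integral_le A x c a I1 ->
  KS_integral_le A x a d (I - I1).
Proof.
move=> ca ad intI intI1 e e_gt0.
have [delta [delta_gt0 close]] :=
  KS_integral_le_subinterval_gauge (le_trans ca ad) intI e_gt0.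
exists delta; split=> [t /andP[a_t td]|m D T tD fD].
  by apply: delta_gt0; rewrite td (le_trans ca a_t).
rewrite -[I - I1]subr0.
exact: close ca ad (lexx d) intI1 (KS_integral_le0 x d) _ _ _ tD fD.
Qed.

End KurzweilStieltjesIntegral.

Section BoundedVariation.
Variables (R : realType) (n : nat) (A : R -> 'M[R]_n).
Implicit Types (a b c p q t u v : R) (D : nat -> R).

Definition variation_ge a b (r : R) :=
  exists m D, division a b m D /\ r <= var_sum A m D.

Lemma variation_ge_le a b r r' : r' <= r -> variation_ge a b r -> variation_ge a b r'.
Proof. by move=> r'r [m [D [dD rD]]]; exists m, D; split => //; apply: le_trans rD. Qed.

Lemma var_sum_segment a b : var_sum A 1 (segment_points a b) = `|A b - A a|.
Proof. by rewrite /var_sum big_ord1. Qed.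

Lemma variation_ge_segment a b : a < b -> variation_ge a b `|A b - A a|.
Proof.
move=> ab; exists 1%N, (segment_points a b).
by rewrite var_sum_segment; split; first exact: division_segment.
Qed.

Lemma variation_ge0 a b : a <= b -> variation_ge a b 0.
Proof.
rewrite le_eqVlt => /orP[/eqP <-|ab]; last exact: variation_ge_le (variation_ge_segment ab).
by exists 0%N, (fun=> a); split; [do !split | rewrite /var_sum big_ord0].
Qed.

Lemma variation_ge_cat a b c r1 r2 :
  variation_ge a b r1 -> variation_ge b c r2 -> variation_ge a c (r1 + r2).
Proof.
move=> [m1 [D1 [dD1 r1D]]] [m2 [D2 [dD2 r2D]]].
have glue : D1 m1 = D2 0%N by case: dD1 => _ [-> _]; case: dD2 => ->.
exists (m1 + m2)%N, (cat_points m1 D1 D2); split; first exact (division_cat glue dD1 dD2).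
rewrite /var_sum (big_cat_cells m2 glue (fun=> 0) (fun=> 0) (fun u v _ => `|A v - A u|)).
exact: lerD.
Qed.

Lemma bounded_variation_on_bounded a b : bounded_variation_on A a b ->
  exists2 M, 0 <= M & forall t, a <= t <= b -> `|A t| <= M.
Proof.
move=> [V bV]; have bV' t : a < t -> t <= b -> `|A t - A a| <= V.
  move=> lt_at tb; have [m [D [dD le_var]]] := variation_ge_cat
    (variation_ge_segment lt_at) (variation_ge0 tb).
  by rewrite addr0 in le_var; apply: le_trans le_var (bV _ _ dD).
exists (`|A a| + Num.max V 0) => [|t /andP[a_t tb]].
  by rewrite addr_ge0 ?le_max ?lexx ?orbT.
have [<-|ta] := eqVneq t a; first by rewrite lerDl le_max lexx orbT.
have := ler_normD (A a) (A t - A a); rewrite subrKC => /le_trans; apply.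
rewrite lerD2l le_max.
by rewrite bV' // lt_neqAle eq_sym ta a_t.
Qed.

Lemma bounded_variation_on_not_ge a b eps : bounded_variation_on A a b -> 0 < eps ->
  ~ (forall k : nat, variation_ge a b (k%:R * eps)).
Proof.
move=> [V bV] e_gt0 ge_all.
have V_ge k : k%:R * eps <= V.
  by have [m [D [dD le_var]]] := ge_all k; apply: le_trans le_var (bV _ _ dD).
have V_ge0 : 0 <= V by have := V_ge 0%N; rewrite mul0r.
have := archi_boundP (divr_ge0 V_ge0 (ltW e_gt0)).
rewrite ltr_pdivrMr // => /lt_le_trans/(_ (V_ge _)).
by rewrite ltxx.
Qed.

(* If the variation on (t0, t0 + h] stayed above eps for every h, disjoint
   intervals accumulating at t0 would each carry variation eps. *)
Lemma variation_small_right t0 q eps : t0 < q -> bounded_variation_on A t0 q ->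
  0 < eps -> exists2 h, 0 < h & forall u v m D,
    t0 < u -> v <= t0 + h -> division u v m D -> var_sum A m D <= eps.
Proof.
move=> t0q bV e_gt0; apply: contrapT => no_h.
have large h : 0 < h -> exists u v, [/\ t0 < u, v <= t0 + h & variation_ge u v eps].
  move=> h_gt0; apply: contrapT => no_uv; apply: no_h; exists h => // u v m D t0u vh dD.
  rewrite leNgt; apply/negP => var_gt; apply: no_uv.
  by exists u, v; split => //; exists m, D; split => //; apply: ltW.
apply: (bounded_variation_on_not_ge bV e_gt0) => k.
suff [u [t0u _ ge_k]] : exists u, [/\ t0 < u, u <= q & variation_ge u q (k%:R * eps)].
  by rewrite -[_ * eps]add0r; apply: variation_ge_cat (variation_ge0 (ltW t0u)) ge_k.
elim: k => [|k [u [t0u uq ge_k]]].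
  by exists q; split; rewrite ?lexx // mul0r; apply: variation_ge0.
have [u' [v' [t0u' v'u ge1]]] := large (u - t0) (ltac:(lra)).
have u'v' : u' <= v' by case: ge1 => m [D [/division_ends_le]].
exists u'; split => //; first by lra.
rewrite -natr1 mulrDl mul1r addrC; apply: variation_ge_cat ge1 _.
by rewrite -[_ * eps]add0r; apply: variation_ge_cat (variation_ge0 _) ge_k; lra.
Qed.

Lemma division_reflect a b m D : division a b m D ->
  division (- b) (- a) m (fun i => - D (m - i)%N).
Proof.
move=> [D0 [Dm incr]]; split; first by rewrite subn0 Dm.
split=> [|i im]; first by rewrite subnn D0.
rewrite ltrN2 -(subnSK im); apply: incr.
by rewrite ltn_subrL /=; apply: leq_ltn_trans im.
Qed.

Lemma var_sum_reflect m D :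
  var_sum (fun t => A (- t)) m D = var_sum A m (fun i => - D (m - i)%N).
Proof.
rewrite /var_sum (reindex_inj rev_ord_inj); apply: eq_bigr => i _.
by rewrite /= subnSK // distrC.
Qed.

Lemma bounded_variation_on_reflect a b : bounded_variation_on A a b ->
  bounded_variation_on (fun t => A (- t)) (- b) (- a).
Proof.
move=> [V bV]; exists V => m D dD; rewrite var_sum_reflect; apply: bV.
by have := division_reflect dD; rewrite !opprK.
Qed.

End BoundedVariation.

Section LeftLimit.
Variables (R : realType) (n : nat) (A : R -> 'M[R]_n).
Implicit Types (p u v : R) (D : nat -> R).

Lemma variation_small_left p t0 eps : p < t0 -> bounded_variation_on A p t0 ->
  0 < eps -> exists2 h, 0 < h & forall u v m D,
    t0 - h <= u -> v < t0 -> division u v m D -> var_sum A m D <= eps.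
Proof.
move=> pt0 bV e_gt0; have [h h_gt0 small] := variation_small_right
  (ltac:(by rewrite ltrN2) : - t0 < - p) (bounded_variation_on_reflect bV) e_gt0.
exists h => // u v m D hu vt0 dD.
have -> : A = (fun t => A (- - t)) by apply/funext => t; rewrite opprK.
rewrite (var_sum_reflect (fun t => A (- t))).
by apply: small (division_reflect dD); rewrite ?ltrN2 //; lra.
Qed.

Lemma cvg_left_bounded_variation p t0 : p < t0 -> bounded_variation_on A p t0 ->
  A s @[s --> t0^'-] --> lim (A s @[s --> t0^'-]).
Proof.
move=> pt0 bV; apply/cauchy_cvgP/cauchy_exP => e e_gt0.
have e2_gt0 : 0 < e / 2 by rewrite divr_gt0.
have [h h_gt0 small] := variation_small_left pt0 bV e2_gt0.
exists (A (t0 - h / 2)).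
suff : \forall s \near t0^'-, ball (A (t0 - h / 2)) e (A s) by [].
near=> s.
have s_gt : t0 - h / 2 < s by near: s; apply: nbhs_left_gt; lra.
have s_lt : s < t0 by near: s; exact: nbhs_left_lt.
rewrite -ball_normE /ball_ /= distrC.
have h_le : t0 - h <= t0 - h / 2 by lra.
have := small _ _ _ _ h_le s_lt (division_segment s_gt).
by rewrite var_sum_segment => /le_lt_trans; apply; lra.
Unshelve. all: by end_near.
Qed.

End LeftLimit.

Lemma real_induction (R : realType) (P : R -> Prop) (s0 : R) : P s0 ->
  (forall c, s0 < c -> (forall r, s0 <= r < c -> P r) -> P c) ->
  (forall c, s0 <= c -> (forall r, s0 <= r <= c -> P r) ->
     exists2 h, 0 < h & forall r, c <= r <= c + h -> P r) ->
  forall t, s0 <= t -> P t.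
Proof.
move=> P_s0 left_step right_step t s0t; apply: contrapT => not_Pt.
pose S := [set x | s0 <= x <= t /\ forall r, s0 <= r <= x -> P r].
have S_s0 : S s0.
  split=> [|r /andP[s0r rs0]]; first by rewrite lexx s0t.
  by have -> // : r = s0 by apply/le_anti; rewrite rs0 s0r.
have supS : has_sup S by split; [exists s0 | exists t => x [/andP[]]].
pose c := sup S.
have s0c : s0 <= c by apply: sup_upper_bound.
have ct : c <= t by apply: ge_sup; [exists s0 | move=> x [/andP[]]].
have P_lt_c r : s0 <= r < c -> P r.
  move=> /andP[s0r rc]; have rc_gt0 : 0 < c - r by rewrite subr_gt0.
  have [x [_ Px] rx] := sup_adherent rc_gt0 supS.
  by apply: Px; rewrite s0r; move: rx; rewrite -/c; lra.
have P_le_c r : s0 <= r <= c -> P r.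
  move=> /andP[s0r]; rewrite le_eqVlt => /orP[/eqP ->|rc]; last first.
    by apply: P_lt_c; rewrite s0r.
  have [-> //|cs0] := eqVneq c s0.
  by apply: left_step P_lt_c; rewrite lt_neqAle eq_sym cs0 s0c.
have [h h_gt0 P_right] := right_step c s0c P_le_c.
have [ct'|ct'] := eqVneq c t.
  by apply: not_Pt; rewrite -ct'; apply: P_le_c; rewrite s0c lexx.
have {ct ct'} ct : c < t by rewrite lt_neqAle ct' ct.
pose x := Num.min (c + h) t.
have S_x : S x.
  split=> [|r /andP[s0r rx]].
    by rewrite /x ge_min lexx orbT andbT le_min s0t andbT; lra.
  have [rc|cr] := leP r c; first by apply: P_le_c; rewrite s0r.
  by apply: P_right; rewrite ltW //=; move: rx; rewrite le_min => /andP[].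
have : x <= c by apply: sup_upper_bound.
by rewrite ge_min; apply/negP; rewrite negb_or -!ltNge ct andbT; lra.
Qed.

Section Solutions.
Variables (R : realType) (n : nat) (A : R -> 'M[R]_n).
Implicit Types (a b c d t u v w : R) (y : R -> 'cV[R]_n).

Lemma solution_integral_le s0 y a b : is_solution_from A s0 y ->
  s0 <= a -> a <= b -> KS_integral_le A y a b (y b - y a).
Proof.
by move=> y_sol s0a ab; have := y_sol a b s0a (le_trans s0a ab); rewrite /KS_integral ab.
Qed.

Lemma solution_uniform_gauge s0 y c d : is_solution_from A s0 y ->
  s0 <= c -> c <= d -> forall eps, 0 < eps -> exists2 delta : R -> R,
    (forall t, c <= t <= d -> 0 < delta t) &
    forall a b, c <= a -> a <= b -> b <= d ->
      forall m D T, tagged_division a b m D T -> delta_fine delta m D T ->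
        `|KS_sum A y m D T - (y b - y a)| < eps.
Proof.
move=> y_sol s0c cd e e_gt0.
have [delta [delta_gt0 close]] := KS_integral_le_subinterval_gauge cd
  (solution_integral_le y_sol s0c cd) e_gt0.
exists delta => // a b ca ab bd m D T tD fD.
have s0b : s0 <= b by rewrite (le_trans s0c) // (le_trans ca).
have := close a b _ _ ca ab bd (solution_integral_le y_sol s0c ca)
  (solution_integral_le y_sol s0b bd) m D T tD fD.
suff -> : y d - y c - (y a - y c) - (y d - y b) = y b - y a by [].
by apply/matrixP => i j; rewrite !mxE; ring.
Qed.

Lemma solution_local_bound s0 y a b : bounded_variation_on A a b ->
  is_solution_from A s0 y -> s0 <= a -> a <= b ->
  exists C (delta : R -> R), [/\ 0 <= C, forall t, a <= t <= b -> 0 < delta t &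
    forall t w, a <= t <= b -> a <= w <= b -> w - delta w < t < w + delta w ->
      `|y t| <= C * `|y w| + 1].
Proof.
move=> bV y_sol s0a ab.
have [MA MA_ge0 A_le] := bounded_variation_on_bounded bV.
have [delta delta_gt0 close] := solution_uniform_gauge y_sol s0a ab ltr01.
pose C := n%:R * (MA + MA).
have C_ge0 : 0 <= C by rewrite mulr_ge0 ?addr_ge0.
have cell u v z : u < v -> a <= u -> v <= b -> u <= z <= v ->
    z - delta z < u -> v < z + delta z -> `|y v - y u| <= C * `|y z| + 1.
  move=> uv au vb uzv zu vz.
  have := close u v au (ltW uv) vb _ _ _ (tagged_division_segment uv uzv)
    (delta_fine_segment zu vz).
  rewrite KS_sum_segment distrC => close1.
  have jump_le : `|(A v - A u) *m y z| <= C * `|y z|.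
    have abu : a <= u <= b by rewrite au (le_trans (ltW uv) vb).
    have abv : a <= v <= b by rewrite vb (le_trans au (ltW uv)).
    apply: le_trans (normr_mulmx_le _ _) _; rewrite ler_wpM2r ?ler_wpM2l //.
    by rewrite (le_trans (ler_normB _ _)) // lerD ?A_le.
  have := lerB_dist (y v - y u) ((A v - A u) *m y z); lra.
exists (1 + C), delta; split=> // [|t w /andP[a_t tb] /andP[a_w wb] /andP[wt tw]].
  by rewrite addr_ge0.
rewrite mulrDl mul1r -addrA; have := lerB_dist (y t) (y w).
have [tw'|wt'|->] := ltgtP t w.
- by have := cell t w w tw' a_t wb; rewrite lexx ltW // distrC => /(_ isT wt); lra.
- by have := cell w t w wt' a_w tb; rewrite lexx ltW // => /(_ isT _ tw); lra.
- by have := mulr_ge0 C_ge0 (normr_ge0 (y w)); lra.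
Qed.

Lemma solution_bounded s0 y a b : bounded_variation_on A a b ->
  is_solution_from A s0 y -> s0 <= a -> a <= b ->
  exists M, forall t, a <= t <= b -> `|y t| <= M.
Proof.
move=> bV y_sol s0a ab.
have [C [delta [C_ge0 delta_gt0 y_le]]] := solution_local_bound bV y_sol s0a ab.
have [m [D [T [[dD tag] fine]]]] := cousin ab delta_gt0.
pose F (i : 'I_m) := C * `|y (T i)| + 1.
have F_ge0 i : 0 <= F i by rewrite addr_ge0 ?mulr_ge0.
exists (`|y a| + \sum_i F i) => t /andP[a_t tb].
have [<-|ta] := eqVneq a t; first by rewrite lerDl sumr_ge0.
have at' : a < t by rewrite lt_neqAle ta a_t.
have [i im /andP[Dt tD]] := division_cover dD at' tb.
have /andP[DT TD] := tag i im; have [fine1 fine2] := fine i im.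
have abT : a <= T i <= b.
  by have := division_bounds dD (ltnW im); have := division_bounds dD im; lra.
have := y_le t (T i) (ltac:(by rewrite a_t tb)) abT (ltac:(apply/andP; split; lra)).
have : F (Ordinal im) <= \sum_i F i by rewrite (bigD1 (Ordinal im)) //= lerDl sumr_ge0.
by rewrite /F /=; have := normr_ge0 (y a); lra.
Qed.

(* A gauge below r |-> r - c forces the first tag of a fine division of [c, t]
   to be c, where y vanishes; the remaining cells lie in (c, t] and are
   controlled by the variation of A there. *)
Lemma solution_contraction s0 y c h K eps : is_solution_from A s0 y ->
  s0 <= c -> y c = 0 -> 0 <= eps ->
  (forall u v m D, c < u -> v <= c + h -> division u v m D -> var_sum A m D <= eps) ->
  (forall t, c <= t <= c + h -> `|y t| <= K) ->
  forall t, c <= t <= c + h -> `|y t| <= n%:R * K * eps.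
Proof.
move=> y_sol s0c yc0 eps_ge0 var_le y_le t /andP[ct th].
have K_ge0 : 0 <= K by have := y_le c; rewrite yc0 normr0 lexx (le_trans ct th); apply.
have [<-|tc] := eqVneq c t; first by rewrite yc0 normr0 !mulr_ge0.
have {tc} ct' : c < t by rewrite lt_neqAle tc ct.
apply/ler_addgt0Pr => e e_gt0.
have [d [d_gt0 close]] := solution_integral_le y_sol s0c ct e_gt0.
pose delta r := Num.min (d r) (if c < r then r - c else 1).
have delta_gt0 r : c <= r <= t -> 0 < delta r.
  by move=> crt; rewrite lt_min d_gt0 //=; case: ifP => // cr; rewrite subr_gt0.
have [[|m] [D [T [tD fD]]]] := cousin ct delta_gt0.
  by case: tD => -[D0 [Dm _]] _; move: ct'; rewrite -D0 -Dm ltxx.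
have T0 : T 0%N = c.
  by apply: delta_fine_first_tag tD (delta_fine_minr fD) => r ->.
have := close _ _ _ tD (delta_fine_minl fD).
rewrite KS_sum_recl T0 yc0 mulmx0 add0r subr0.
set S := KS_sum _ _ _ _ _ => close_S.
have [[D0 [Dm incr]] tag] := tD.
have yT_le i : (i < m)%N -> `|y (T i.+1)| <= K.
  move=> im; have /andP[DT TD] := tag i.+1 im.
  have /andP[cD _] := division_bounds tD.1 (i := i.+1) (ltnW im).
  have /andP[_ Dt] := division_bounds tD.1 (i := i.+2) im.
  by apply: y_le; apply/andP; split; lra.
have S_le : `|S| <= n%:R * K * eps.
  apply: le_trans (normr_KS_sum_le A (fun i => D i.+1) yT_le) _.
  rewrite ler_wpM2l ?mulr_ge0 //; apply: var_le (division_behead tD.1) => //.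
  by rewrite -D0; apply: incr.
by have := lerB_dist (y t) S; rewrite distrC; lra.
Qed.

Lemma solution_zero_right s0 y c : loc_BV_J A -> is_solution_from A s0 y ->
  0 <= s0 -> s0 <= c -> y c = 0 ->
  exists2 h, 0 < h & forall t, c <= t <= c + h -> y t = 0.
Proof.
move=> bV y_sol s0_ge0 s0c yc0.
pose eps : R := (n%:R + 1)^-1 / 2.
have eps_gt0 : 0 < eps by rewrite divr_gt0 // invr_gt0 ltr_wpDl.
have n_eps : n%:R * eps <= 1 / 2.
  rewrite /eps mulrA ler_pM2r ?invr_gt0 // ler_pdivrMr ?ltr_wpDl //.
  by rewrite mul1r lerDl.
have c_ge0 := le_trans s0_ge0 s0c.
have c_lt : c < c + 1 by rewrite ltrDl.
have [h h_gt0 var_le] :=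
  variation_small_right c_lt (bV c (c + 1) c_ge0 (ltW c_lt)) eps_gt0.
exists h => //.
have ch : c <= c + h by rewrite lerDl ltW.
have [M y_le] := solution_bounded (bV c (c + h) c_ge0 ch) y_sol s0c ch.
pose Y := [set r | exists2 t, c <= t <= c + h & r = `|y t|].
have Y_c : Y `|y c| by exists c; rewrite ?lexx ?ch.
have supY : has_sup Y by split; [exists `|y c| | exists M => r [t ? ->]; apply: y_le].
pose K := sup Y.
have y_K t : c <= t <= c + h -> `|y t| <= K.
  by move=> cth; apply: sup_upper_bound => //; exists t.
have K_le : K <= n%:R * K * eps.
  apply: ge_sup; first by exists `|y c|.
  move=> r [t cth ->].
  exact: solution_contraction y_sol s0c yc0 (ltW eps_gt0) var_le y_K t cth.
have K_ge0 : 0 <= K by have := y_K c; rewrite yc0 normr0 lexx ch; apply.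
move=> t cth; apply/eqP; rewrite -normr_le0; apply: le_trans (y_K t cth) _.
by have := ler_wpM2l K_ge0 n_eps; rewrite mulrCA mulrA; lra.
Qed.

Lemma solution_left_jump s0 y c : loc_BV_J A -> is_solution_from A s0 y ->
  0 <= s0 -> s0 < c -> (forall r, s0 <= r < c -> y r = 0) ->
  jump_minus A c *m y c = y c.
Proof.
move=> bV y_sol s0_ge0 s0c y0.
have := cvg_left_bounded_variation s0c (bV _ _ s0_ge0 (ltW s0c)).
rewrite /jump_minus; set L := lim _ => A_cvg; set v := y c.
apply/eqP; rewrite -subr_eq0 -normr_le0; apply/ler_addgt0Pr => e e_gt0.
rewrite add0r; have e2_gt0 : 0 < e / 2 by rewrite divr_gt0.
have [d d_gt0 close] := solution_uniform_gauge y_sol (lexx s0) (ltW s0c) e2_gt0.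
have dc_gt0 : 0 < d c by rewrite d_gt0 // lexx ltW.
pose k := n%:R * `|v| + 1.
have k_gt0 : 0 < k by rewrite ltr_pwDr ?mulr_ge0.
have eta_gt0 : 0 < e / 2 / k by rewrite !divr_gt0.
have : \forall tau \near c^'-,
    [/\ `|L - A tau| < e / 2 / k, c - d c < tau, s0 < tau & tau < c].
  near=> tau; split; near: tau.
  - exact: cvgr_dist_lt.
  - by apply: nbhs_left_gt; lra.
  - exact: nbhs_left_gt.
  - exact: nbhs_left_lt.
move=> /(@filter_ex _ _ (at_left_proper_filter c)) [tau [A_tau dtau s0tau tauc]].
have c_lt : c < c + d c by rewrite ltrDl.
have := close tau c (ltW s0tau) (ltW tauc) (lexx c) _ _ _
  (tagged_division_segment tauc (t := c) (ltac:(by rewrite lexx ltW)))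
  (delta_fine_segment dtau c_lt).
rewrite KS_sum_segment (y0 tau) ?(ltW s0tau) // subr0 -/v => close_tau.
have -> : (A c - L) *m v - v = ((A c - A tau) *m v - v) + (A tau - L) *m v.
  by rewrite addrAC -mulmxDl addrA subrK.
apply: le_trans (ler_normD _ _) _.
have : `|(A tau - L) *m v| <= `|A tau - L| * k.
  apply: le_trans (normr_mulmx_le _ _) _.
  by rewrite mulrAC [X in _ <= X]mulrC ler_wpM2r // /k lerDl.
have : `|A tau - L| * k < e / 2 by rewrite -ltr_pdivlMr // distrC.
lra.
Unshelve. all: by end_near.
Qed.

Lemma solution_eq0 s0 y : loc_BV_J A ->
  (forall t, 0 < t -> 1%:M - jump_minus A t \in unitmx) ->
  0 <= s0 -> is_solution_from A s0 y -> y s0 = 0 -> forall t, s0 <= t -> y t = 0.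
Proof.
move=> bV jump_inv s0_ge0 y_sol ys0; apply: real_induction => // [c s0c y0|c s0c y0].
  have jump_y := solution_left_jump bV y_sol s0_ge0 s0c y0.
  rewrite -(mulKmx (jump_inv c (le_lt_trans s0_ge0 s0c)) (y c)).
  by rewrite mulmxBl mul1mx jump_y subrr mulmx0.
have yc0 : y c = 0 by apply: y0; rewrite s0c lexx.
exact: solution_zero_right bV y_sol s0_ge0 s0c yc0.
Qed.

End Solutions.

Section TransitionMatrix.
Variables (R : realType) (n : nat) (A : R -> 'M[R]_n) (U : R -> R -> 'M[R]_n).
Hypothesis U_transition : transition_matrix A U.
Implicit Types (s t : R) (x y : R -> 'cV[R]_n).

Lemma solutionB s0 x y : is_solution_from A s0 x -> is_solution_from A s0 y ->
  is_solution_from A s0 (fun t => x t - y t).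
Proof.
move=> x_sol y_sol a b s0a s0b.
have := x_sol a b s0a s0b; have := y_sol a b s0a s0b.
have -> : x b - y b - (x a - y a) = (x b - x a) - (y b - y a).
  by apply/matrixP => i j; rewrite !mxE; ring.
rewrite /KS_integral; case: ifP => _ int_y int_x.
  exact: KS_integral_leB int_x int_y.
by rewrite opprD; apply: KS_integral_leB int_x int_y.
Qed.

Lemma transition_matrix_integral_le s0 t : 0 <= s0 -> s0 <= t ->
  KS_integral_le A (fun r => U r s0) s0 t (U t s0 - 1%:M).
Proof.
move=> s0_ge0 s0t; have := U_transition (le_trans s0_ge0 s0t) s0_ge0.
by rewrite /KS_integral s0t.
Qed.

Lemma transition_matrix_diag s : 0 <= s -> U s s = 1%:M.
Proof.
move=> s_ge0; apply/eqP; rewrite -subr_eq0; apply/eqP.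
exact: KS_integral_le_unique (lexx s) (transition_matrix_integral_le s_ge0 (lexx s))
  (KS_integral_le0 _ _ _).
Qed.

Lemma transition_matrix_solution s0 (v : 'cV[R]_n) : 0 <= s0 ->
  is_solution_from A s0 (fun t => U t s0 *m v).
Proof.
move=> s0_ge0.
have int_le a b : s0 <= a -> a <= b ->
    KS_integral_le A (fun t => U t s0 *m v) a b (U b s0 *m v - U a s0 *m v).
  move=> s0a ab; have s0b := le_trans s0a ab.
  have := KS_integral_le_restrict s0a ab (transition_matrix_integral_le s0_ge0 s0b)
    (transition_matrix_integral_le s0_ge0 s0a).
  by move/(KS_integral_le_mulmxr v); rewrite opprB addrA subrK mulmxBl.
move=> a b s0a s0b; rewrite /KS_integral; case: leP => [ab|/ltW ba].
  exact: int_le.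
by rewrite opprB; apply: int_le.
Qed.

Lemma solution_transition s0 x : loc_BV_J A ->
  (forall t, 0 < t -> 1%:M - jump_minus A t \in unitmx) ->
  0 <= s0 -> is_solution_from A s0 x -> forall t, s0 <= t -> x t = U t s0 *m x s0.
Proof.
move=> bV jump_inv s0_ge0 x_sol t s0t; apply/eqP; rewrite -subr_eq0; apply/eqP.
apply: (solution_eq0 bV jump_inv s0_ge0 (y := fun t => x t - U t s0 *m x s0)) => //.
  exact: solutionB x_sol (transition_matrix_solution _ s0_ge0).
by rewrite transition_matrix_diag // mul1mx subrr.
Qed.

End TransitionMatrix.

Section Stability.
Variables (R : realType) (n : nat) (A : R -> 'M[R]_n) (U : R -> R -> 'M[R]_n).
Hypotheses (bV : loc_BV_J A) (U_transition : transition_matrix A U).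

Lemma transition_matrix_bounded s0 : 0 <= s0 ->
  `|U t s0| @[t --> +oo] --> (0 : R) ->
  exists2 B, 0 <= B & forall t, s0 <= t -> `|U t s0| <= B.
Proof.
move=> s0_ge0 /cvgr_dist_lt/(_ 1 ltr01) [M [_ U_lt1]].
pose T := Num.max (M + 1) s0.
have s0T : s0 <= T by rewrite le_max lexx orbT.
have col_bounded (j : 'I_n) : exists Bj, forall t, s0 <= t <= T -> `|col j (U t s0)| <= Bj.
  under eq_exists do under eq_forall do rewrite colE.
  exact: solution_bounded (bV s0_ge0 s0T)
    (transition_matrix_solution U_transition _ s0_ge0) (lexx s0) s0T.
have [B B_le] := choice col_bounded.
exists (Num.max (\sum_j `|B j|) 1) => [|t s0t]; first by rewrite le_max ler01 orbT.
have [tT|Tt] := leP t T.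
  rewrite le_max; apply/orP; left; apply: le_trans (mx_norm_le_sum_col _) _.
  by apply: ler_sum => j _; rewrite (le_trans (B_le j t _)) ?ler_norm ?s0t.
have M_t : M < t by move: Tt; rewrite gt_max => /andP[]; lra.
have := U_lt1 t M_t; rewrite sub0r normrN normr_id => U_lt.
by rewrite le_max (ltW U_lt) orbT.
Qed.

Lemma glob_asympt_stable_transition_cvg0 : trivial_glob_asympt_stable A ->
  forall s0, 0 <= s0 -> `|U t s0| @[t --> +oo] --> (0 : R).
Proof.
move=> [_ attractive] s0 s0_ge0.
have col_cvg0 (j : 'I_n) : `|col j (U t s0)| @[t --> +oo] --> (0 : R).
  under eq_fun do rewrite colE.
  exact: attractive s0_ge0 (transition_matrix_solution U_transition _ s0_ge0) erefl.
have sum_cvg0 : \sum_j `|col j (U t s0)| @[t --> +oo] --> (0 : R).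
  have := @cvg_big _ 'I_n +%R 0 xpredT add_continuous R _ (index_enum _)
    (fun j t => `|col j (U t s0)|) (fun=> 0) _ (fun j _ => col_cvg0 j).
  by rewrite big1 //; apply; exact: filter_class.
apply: (squeeze_cvgr (f := fun=> 0) _ (cvg_cst _) sum_cvg0).
by near=> t; rewrite normr_ge0 mx_norm_le_sum_col.
Unshelve. all: by end_near.
Qed.

Hypothesis jump_inv : forall t : R, 0 < t -> 1%:M - jump_minus A t \in unitmx.

Lemma transition_cvg0_glob_asympt_stable :
  (forall s0, 0 <= s0 -> `|U t s0| @[t --> +oo] --> (0 : R)) ->
  trivial_glob_asympt_stable A.
Proof.
move=> U_cvg0; have x_eq := solution_transition U_transition bV jump_inv.
split=> [s0 e s0_ge0 e_gt0|s0 x0 x s0_ge0 x_sol xs0].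
  have [B B_ge0 U_le] := transition_matrix_bounded s0_ge0 (U_cvg0 s0 s0_ge0).
  have k_gt0 : 0 < n%:R * B + 1 by rewrite ltr_pwDr ?mulr_ge0.
  exists (e / (n%:R * B + 1)); split=> [|x0 x x0_lt x_sol xs0 t s0t].
    by rewrite divr_gt0.
  rewrite (x_eq _ _ s0_ge0 x_sol t s0t) xs0; apply: le_lt_trans (normr_mulmx_le _ _) _.
  rewrite ltr_pdivlMr // in x0_lt.
  have := ler_wpM2r (normr_ge0 x0) (ler_wpM2l (ler0n R n) (U_le t s0t)).
  by have := normr_ge0 x0; nra.
apply: (squeeze_cvgr (f := fun=> 0) (h := fun t => n%:R * `|U t s0| * `|x0|)).
- near=> t; rewrite normr_ge0 /=.
  have s0t : s0 <= t by near: t; apply: nbhs_pinfty_ge; exact: num_real.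
  by rewrite (x_eq _ _ s0_ge0 x_sol t s0t) xs0 normr_mulmx_le.
- exact: cvg_cst.
- have := cvgMr_tmp (b := `|x0|) (cvgMl_tmp (a := n%:R) (U_cvg0 s0 s0_ge0)).
  by rewrite mulr0 mul0r; apply; exact: filter_class.
Unshelve. all: by end_near.
Qed.

End Stability.

Unset Implicit Arguments.

Theorem theorem3p6 (R : realType) (n : nat) (A : R -> 'M[R]_n)
    (U : R -> R -> 'M[R]_n) :
  loc_BV_J A ->
  (forall t : R, 0 < t -> 1%:M - jump_minus A t \in unitmx) ->
  (forall t : R, 0 <= t -> 1%:M + jump_plus A t \in unitmx) ->
  transition_matrix A U ->
  (trivial_glob_asympt_stable A <->
   forall s0 : R, 0 <= s0 -> `|U t s0| @[t --> +oo] --> (0 : R)).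
Proof.
(* Invertibility of I + Delta^+ A only matters for solving backwards in time. *)
move=> bV jump_inv _ U_transition; split.
- exact: glob_asympt_stable_transition_cvg0.
- exact: transition_cvg0_glob_asympt_stable.
Qed.
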